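(* Consider the setting described in the context (linear problem, Gauss–Radau collocation nodes, $L$ time steps, arbitrary lower-triangular preconditioner $\mathbf{Q}_\Delta$). Then the smoother of PFASST converges if the CFL number $\mu$ is small enough. More precisely, there exist a fixed value $\mu^*_{S,0}>0$ and a constant $c>0$ independent of $\mu$ such that for all $0<\mu<\mu^*_{S,0}$, $$\rho\big(\mathbf{T}_S(\mu)\big)\le c\,\mu^{1/L},$$ where $\mathbf{T}_S(\mu)=\mathbf{I}_{LMN}-\hat{\mathbf{P}}^{-1}\mathbf{C}$ and $\rho$ denotes the spectral radius.
   Context: Fix positive integers $L$ (number of time steps), $M$ (number of collocation nodes) and $N$ (number of spatial degrees of freedom). Let $0<\tau_1<\dots<\tau_M=1$ be the (right) Gauss–Radau nodes on $[0,1]$, $\ell_j$ the associated Lagrange basis polynomials, and $\mathbf{Q}=(q_{m,j})\in\mathbb{R}^{M\times M}$ with $q_{m,j}=\int_0^{\tau_m}\ell_j(s)\,ds$ (collocation matrix). Let $\mathbf{Q}_\Delta\in\mathbb{R}^{M\times M}$ be the lower-triangular weight matrix of a simpler quadrature rule (the SDC preconditioner). Let $\mathbf{A}\in\mathbb{C}^{N\times N}$ (spatial matrix) and $\mu>0$ (CFL number). Let $\mathbf{N}_M\in\mathbb{R}^{M\times M}$ have all entries of its last column equal to $1$ and all other entries $0$, let $\mathbf{H}=\mathbf{N}_M\otimes\mathbf{I}_N$, and let $\mathbf{E}\in\mathbb{R}^{L\times L}$ have ones on the first subdiagonal and zeros elsewhere. The composite collocation matrix is $\mathbf{C}=\mathbf{I}_{LMN}-\mu\,\mathbf{I}_L\otimes\mathbf{Q}\otimes\mathbf{A}-\mathbf{E}\otimes\mathbf{H}$.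 The fine-level approximative block Jacobi preconditioner is $\hat{\mathbf{P}}=\mathbf{I}_{LMN}-\mu\,\mathbf{I}_L\otimes\mathbf{Q}_\Delta\otimes\mathbf{A}$, assumed invertible, and the smoother's iteration matrix is $\mathbf{T}_S(\mu)=\mathbf{I}_{LMN}-\hat{\mathbf{P}}^{-1}\mathbf{C}$. *)

From HB Require Import structures.
From mathcomp Require Import all_boot all_order all_algebra.
From mathcomp Require Import classical_sets reals exp.
From mathcomp Require Import complex mxtens.
Set Implicit Arguments. Unset Strict Implicit. Unset Printing Implicit Defensive.
Import Order.TTheory GRing.Theory Num.Theory.
Local Open Scope ring_scope.
Local Open Scope classical_set_scope.

Section Defs.
Variable R : realType.

Definition pint (p : {poly R}) (x : R) : R :=
  \sum_(i < size p) p`_i * x ^+ i.+1 / (i.+1)%:R.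

Definition lagr (M : nat) (tau : 'I_M -> R) (j : 'I_M) : {poly R} :=
  \prod_(k < M | k != j) (('X - (tau k)%:P) * ((tau j - tau k)^-1)%:P).

Definition is_right_radau (M : nat) (tau : 'I_M -> R) : Prop :=
  [/\ (forall i j : 'I_M, (i < j)%N -> tau i < tau j),
      (forall i, 0 < tau i),
      (forall i : 'I_M, i.+1 = M -> tau i = 1) &
      (forall p : {poly R}, (size p <= (2 * M).-1)%N ->
         pint p 1 = \sum_(j < M) pint (lagr tau j) 1 * p.[tau j])].

Definition collQ (M : nat) (tau : 'I_M -> R) : 'M[R]_M :=
  \matrix_(m, j) pint (lagr tau j) (tau m).

Definition lower_tri (M : nat) (A : 'M[R]_M) : Prop :=
  forall i j : 'I_M, (i < j)%N -> A i j = 0.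

Definition toC (x : R) : R[i] := (x%:C)%C.

Definition NM (M : nat) : 'M[R[i]]_M := \matrix_(i, j) ((j.+1 == M)%:R).
Definition Esub (L : nat) : 'M[R[i]]_L := \matrix_(i, j) ((i == j.+1 :> nat)%:R).

(* Kronecker products are taken right-associated: X (x) (Y (x) Z) *)
Definition Hmat (M N : nat) : 'M[R[i]]_(M * N) := NM M *t (1%:M : 'M_N).

Definition collC (L M N : nat) (tau : 'I_M -> R) (A : 'M[R[i]]_N) (mu : R)
  : 'M[R[i]]_(L * (M * N)) :=
  1%:M - toC mu *: ((1%:M : 'M_L) *t (map_mx toC (collQ tau) *t A))
       - Esub L *t Hmat M N.

Definition Phat (L M N : nat) (QD : 'M[R]_M) (A : 'M[R[i]]_N) (mu : R)
  : 'M[R[i]]_(L * (M * N)) :=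
  1%:M - toC mu *: ((1%:M : 'M_L) *t (map_mx toC QD *t A)).

Definition TS (L M N : nat) (tau : 'I_M -> R) (QD : 'M[R]_M)
  (A : 'M[R[i]]_N) (mu : R) : 'M[R[i]]_(L * (M * N)) :=
  1%:M - invmx (Phat L QD A mu) *m collC L tau A mu.

Definition spectral_radius (n : nat) (T : 'M[R[i]]_n) : R :=
  sup [set ComplexField.Normc.normc l | l in [set l | eigenvalue T l]].

End Defs.

From HB Require Import structures.
From mathcomp Require Import all_boot all_order all_algebra.
From mathcomp Require Import boolp classical_sets reals exp.
From mathcomp Require Import complex mxtens.
From mathcomp Require Import lra.
Import Order.TTheory GRing.Theory Num.Theory.
Local Open Scope ring_scope.

(* Write P := Phat, K_D := I (x) Q_Delta (x) A, K_Q := I (x) Q (x) A and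
   G := E (x) H.  Then C = P - (mu (K_Q - K_D) + G) and P^-1 = I + mu P^-1 K_D,
   so T_S(mu) = P^-1 (mu (K_Q - K_D) + G) = G + mu W(mu), where W(mu) stays
   bounded for small mu because so does P^-1.  As E is nilpotent, G^L = 0, so
   T_S(mu)^L = (G + mu W)^L - G^L = O(mu) in any submultiplicative norm.  Every
   eigenvalue lambda of T_S(mu) then satisfies |lambda|^L <= ||T_S(mu)^L||
   = O(mu). *)

Set Implicit Arguments.
Unset Strict Implicit.

Section EntrywiseNorm.
Variable R : realType.
Local Notation C := R[i].
Local Notation normc := (@ComplexField.Normc.normc R).

Lemma normc_ge0 (x : C) : 0 <= normc x.
Proof. by case: x => a b; rewrite /= sqrtr_ge0. Qed.

Lemma normc_toC (a : R) : 0 <= a -> normc (toC a) = a.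
Proof. by move=> a0; rewrite /toC /= expr0n /= addr0 sqrtr_sqr ger0_norm. Qed.

Lemma normcX (x : C) k : normc (x ^+ k) = normc x ^+ k.
Proof.
elim: k => [|k IH]; first by rewrite !expr0 ComplexField.Normc.normc1.
by rewrite !exprS ComplexField.Normc.normcM IH.
Qed.

Lemma normc_sum (I : Type) (r : seq I) (P : pred I) (F : I -> C) :
  normc (\sum_(i <- r | P i) F i) <= \sum_(i <- r | P i) normc (F i).
Proof.
elim/big_rec2: _ => [|i y1 y2 _ IH]; first by rewrite ComplexField.Normc.normc0.
by apply: le_trans (le_normcD _ _) _; rewrite lerD2l.
Qed.

(* The entrywise l1 norm: submultiplicative, but mxnorm 1%:M = n, hence the
   factors mxnorm 1%:M below. *)
Definition mxnorm m n (B : 'M[C]_(m, n)) : R := \sum_i \sum_j normc (B i j).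

Lemma mxnorm_ge0 m n (B : 'M[C]_(m, n)) : 0 <= mxnorm B.
Proof. by apply: sumr_ge0 => i _; apply: sumr_ge0 => j _; apply: normc_ge0. Qed.

Lemma mxnorm_eq0 m n (B : 'M[C]_(m, n)) : (mxnorm B == 0) = (B == 0).
Proof.
apply/idP/eqP => [|->]; last first.
  by rewrite /mxnorm big1 // => i _; rewrite big1 // => j _;
     rewrite mxE ComplexField.Normc.normc0.
rewrite psumr_eq0 => [/allP B0|i _]; last by apply: sumr_ge0 => j _; exact: normc_ge0.
apply/matrixP => i j; move: (B0 i (mem_index_enum _)).
rewrite /= psumr_eq0 => [/allP/(_ j (mem_index_enum _))/eqP|k _]; last exact: normc_ge0.
by rewrite mxE => /ComplexField.Normc.eq0_normc.
Qed.

Lemma mxnorm0 m n : mxnorm (0 : 'M[C]_(m, n)) = 0.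
Proof. by apply/eqP; rewrite mxnorm_eq0. Qed.

Lemma mxnormD m n (A B : 'M[C]_(m, n)) : mxnorm (A + B) <= mxnorm A + mxnorm B.
Proof.
rewrite /mxnorm -big_split /=; apply: ler_sum => i _.
by rewrite -big_split /=; apply: ler_sum => j _; rewrite mxE; exact: le_normcD.
Qed.

Lemma mxnormZ m n (a : C) (A : 'M[C]_(m, n)) : mxnorm (a *: A) = normc a * mxnorm A.
Proof.
rewrite /mxnorm mulr_sumr; apply: eq_bigr => i _; rewrite mulr_sumr.
by apply: eq_bigr => j _; rewrite mxE ComplexField.Normc.normcM.
Qed.

Lemma mxnormM m n p (A : 'M[C]_(m, n)) (B : 'M[C]_(n, p)) :
  mxnorm (A *m B) <= mxnorm A * mxnorm B.
Proof.
rewrite /mxnorm mulr_suml; apply: ler_sum => i _.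
apply: (@le_trans _ _ (\sum_k \sum_j normc (A i j) * normc (B j k))).
  apply: ler_sum => k _; rewrite mxE; apply: le_trans (normc_sum _ _ _) _.
  by apply: ler_sum => j _; rewrite ComplexField.Normc.normcM.
rewrite exchange_big /= mulr_suml; apply: ler_sum => j _.
rewrite -mulr_sumr; apply: ler_wpM2l; first exact: normc_ge0.
rewrite (bigD1 j) //= lerDl; apply: sumr_ge0 => k _.
by apply: sumr_ge0 => l _; exact: normc_ge0.
Qed.

End EntrywiseNorm.

Section MatrixPower.
Variable R : realType.
Local Notation C := R[i].
Local Notation normc := (@ComplexField.Normc.normc R).

Definition mxpow n (X : 'M[C]_n) k := iter k (mulmxr X) 1%:M.

Lemma mxpowS n (X : 'M[C]_n) k : mxpow X k.+1 = mxpow X k *m X.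
Proof. by []. Qed.

Lemma mxnorm_mxpow_le n (X : 'M[C]_n) a k : mxnorm X <= a ->
  mxnorm (mxpow X k) <= mxnorm (1%:M : 'M[C]_n) * a ^+ k.
Proof.
move=> Xa; elim: k => [|k IH]; first by rewrite expr0 mulr1.
rewrite mxpowS exprS mulrCA mulrC; apply: le_trans (mxnormM _ _) _.
by apply: ler_pM => //; exact: mxnorm_ge0.
Qed.

Lemma mxnorm_mxpow_perturb n (a b : R) k : 0 <= a -> 0 <= b ->
  exists c : R, 0 <= c /\
  forall (X Y : 'M[C]_n) (e : C),
    mxnorm X <= a -> mxnorm Y <= b -> normc e <= 1 ->
    mxnorm (mxpow (X + e *: Y) k - mxpow X k) <= normc e * c.
Proof.
move=> a0 b0; elim: k => [|k [c [c0 IH]]].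
  by exists 0; split => // X Y e _ _ _; rewrite subrr mxnorm0 mulr0.
have I0 := mxnorm_ge0 (1%:M : 'M[C]_n).
exists (c * (a + b) + mxnorm (1%:M : 'M[C]_n) * a ^+ k * b); split.
  by rewrite addr_ge0 ?mulr_ge0 ?addr_ge0 ?exprn_ge0.
move=> X Y e Xa Yb e1; have e0 := normc_ge0 e.
have XYab : mxnorm (X + e *: Y) <= a + b.
  apply: le_trans (mxnormD _ _) _; rewrite mxnormZ lerD //.
  by have := mxnorm_ge0 Y; nra.
have -> : mxpow (X + e *: Y) k.+1 - mxpow X k.+1 =
    (mxpow (X + e *: Y) k - mxpow X k) *m (X + e *: Y) + mxpow X k *m (e *: Y).
  by rewrite !mxpowS mulmxBl (mulmxDr (mxpow X k)) opprD !addrA subrK.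
apply: le_trans (mxnormD _ _) _; rewrite mulrDr; apply: lerD.
  apply: le_trans (mxnormM _ _) _; rewrite mulrA.
  by apply: ler_pM; rewrite ?mxnorm_ge0 //; exact: IH.
apply: le_trans (mxnormM _ _) _; rewrite mxnormZ mulrCA ler_wpM2l //.
by rewrite ler_pM ?mxnorm_ge0 // mxnorm_mxpow_le.
Qed.

Lemma eigenvector_mxpow n (T : 'M[C]_n) (v : 'rV[C]_n) l k : v *m T = l *: v ->
  v *m mxpow T k = l ^+ k *: v.
Proof.
move=> vT; elim: k => [|k IH]; first by rewrite mulmx1 expr0 scale1r.
by rewrite mxpowS mulmxA IH -scalemxAl vT scalerA exprSr.
Qed.

Lemma normc_eigenvalue_mxpow n (T : 'M[C]_n) l k : eigenvalue T l ->
  normc l ^+ k <= mxnorm (mxpow T k).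
Proof.
case/eigenvalueP => v vT v_neq0.
have v_gt0 : 0 < mxnorm v by rewrite lt_def mxnorm_eq0 v_neq0 mxnorm_ge0.
rewrite -(ler_pM2r v_gt0) [X in _ <= X]mulrC -normcX -mxnormZ.
by rewrite -(eigenvector_mxpow k vT); exact: mxnormM.
Qed.

Lemma spectral_radius_le_root n (T : 'M[C]_n) k (d : R) : (0 < k)%N -> 0 <= d ->
  (forall l, eigenvalue T l -> normc l ^+ k <= d) ->
  spectral_radius T <= d `^ k%:R^-1.
Proof.
move=> k0 d0 eigT; rewrite /spectral_radius; set S := (X in sup X).
have S_ub : ubound S (d `^ k%:R^-1).
  move=> _ [l /= Tl <-].
  have k_neq0 : (k%:R : R) != 0 by rewrite pnatr_eq0 -lt0n.
  have -> : normc l = (normc l ^+ k) `^ k%:R^-1.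
    by rewrite -powR_mulrn ?normc_ge0 // -powRrM mulfV // powRr1 // normc_ge0.
  by apply: ge0_ler_powR; rewrite ?nnegrE ?invr_ge0 ?exprn_ge0 ?normc_ge0 ?eigT.
have [S_neq0|S_eq0] := pselect (exists x, S x); first exact: ge_sup.
have -> : S = set0 by apply/seteqP; split => x // Sx; apply: S_eq0; exists x.
by rewrite sup0 powR_ge0.
Qed.

Lemma mxpow_tens m n (A : 'M[C]_m) (B : 'M[C]_n) k :
  mxpow (A *t B) k.+1 = mxpow A k.+1 *t mxpow B k.+1.
Proof.
elim: k => [|k IH]; first by rewrite /mxpow /= !mul1mx.
by rewrite mxpowS IH tensmx_mul.
Qed.

Lemma mxpow_Esub_eq0 L k (i j : 'I_L) : (i < j + k)%N -> mxpow (Esub R L) k i j = 0.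
Proof.
elim: k i j => [|k IH] i j.
  by rewrite addn0 mxE; case: eqP => // ->; rewrite ltnn.
move=> ij; rewrite mxpowS mxE big1 // => l _.
rewrite [Esub R L l j]mxE; case: eqP => [lj|_]; last by rewrite mulr0.
by rewrite IH ?mul0r // lj addSn -addnS.
Qed.

Lemma Esub_nilpotent L : mxpow (Esub R L) L = 0.
Proof. by apply/matrixP => i j; rewrite mxE mxpow_Esub_eq0 // ltn_addl. Qed.

Lemma tens_Esub_nilpotent L m (B : 'M[C]_m) : (0 < L)%N ->
  mxpow (Esub R L *t B) L = 0.
Proof. by case: L => // L _; rewrite mxpow_tens Esub_nilpotent tens0mx. Qed.

End MatrixPower.

Section Smoother.
Variables (R : realType) (L M N : nat) (tau : 'I_M -> R).
Variables (QD : 'M[R]_M) (A : 'M[R[i]]_N).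
Local Notation C := R[i].
Local Notation n := (L * (M * N))%N.

Let KD : 'M[C]_n := (1%:M : 'M_L) *t (map_mx (@toC R) QD *t A).
Let KQ : 'M[C]_n := (1%:M : 'M_L) *t (map_mx (@toC R) (collQ tau) *t A).
Let G : 'M[C]_n := Esub R L *t Hmat R M N.
Let P mu := Phat L QD A mu.
Let D mu := toC mu *: (KQ - KD) + G.

Lemma collC_Phat mu : collC L tau A mu = P mu - D mu.
Proof.
have split_KD (X Y Z : 'M[C]_n) s :
    1%:M - s *: Y - Z = (1%:M - s *: X) - (s *: (Y - X) + Z).
  by rewrite scalerBr opprD opprB !addrA subrK.
exact: split_KD.
Qed.

Lemma invmx_Phat mu : P mu \in unitmx ->
  invmx (P mu) = 1%:M + toC mu *: (invmx (P mu) *m KD).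
Proof.
move=> Pu; have := mulVmx Pu.
by rewrite {2}/P /Phat mulmxBr mulmx1 -scalemxAr => <-; rewrite subrK.
Qed.

Lemma TS_split mu : P mu \in unitmx ->
  TS L tau QD A mu = G + toC mu *: (KQ - KD + invmx (P mu) *m KD *m D mu).
Proof.
move=> Pu; rewrite /TS collC_Phat -/(P mu) mulmxBr mulVmx // opprB addrC subrK.
rewrite {1}invmx_Phat // mulmxDl mul1mx -scalemxAl {1}/D [in RHS]scalerDr.
by rewrite [toC mu *: _ + G]addrC -addrA.
Qed.

Lemma mxnorm_invmx_Phat mu : 0 <= mu -> mu * mxnorm KD <= 1 / 2 ->
  P mu \in unitmx -> mxnorm (invmx (P mu)) <= 2 * mxnorm (1%:M : 'M[C]_n).
Proof.
move=> mu0 muKD Pu.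
have := mxnorm_ge0 (invmx (P mu)); have := mxnorm_ge0 KD.
have : mxnorm (invmx (P mu)) <=
         mxnorm (1%:M : 'M[C]_n) + mu * (mxnorm (invmx (P mu)) * mxnorm KD).
  rewrite {1}invmx_Phat //; apply: le_trans (mxnormD _ _) _.
  by rewrite mxnormZ normc_toC // lerD2l ler_wpM2l // mxnormM.
nra.
Qed.

Lemma mxnorm_TS_pow_le : (0 < L)%N ->
  exists mustar c : R, 0 < mustar /\ 0 < c /\
  forall mu, 0 < mu -> mu < mustar -> P mu \in unitmx ->
    mxnorm (mxpow (TS L tau QD A mu) L) <= mu * c.
Proof.
move=> L0; pose I1 := mxnorm (1%:M : 'M[C]_n).
pose bW := mxnorm (KQ - KD) + 2 * I1 * mxnorm KD * (mxnorm (KQ - KD) + mxnorm G).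
have I0 := mxnorm_ge0 (1%:M : 'M[C]_n); have KD0 := mxnorm_ge0 KD.
have G0 := mxnorm_ge0 G; have KQD0 := mxnorm_ge0 (KQ - KD).
have bW0 : 0 <= bW by rewrite addr_ge0 ?mulr_ge0 ?addr_ge0.
have [c [c0 perturb]] := mxnorm_mxpow_perturb n L G0 bW0.
exists (1 / (2 * (mxnorm KD + 1))), (c + 1); split; last split.
- by rewrite divr_gt0 ?mulr_gt0 ?ltr_wpDl.
- by rewrite ltr_wpDl.
move=> mu mu0; rewrite ltr_pdivlMr ?mulr_gt0 ?ltr_wpDl // => mu_small Pu.
have [muKD mu1] : mu * mxnorm KD <= 1 / 2 /\ mu <= 1 by split; nra.
have normc_mu : ComplexField.Normc.normc (toC mu) = mu by rewrite normc_toC ?ltW.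
have D_le : mxnorm (D mu) <= mxnorm (KQ - KD) + mxnorm G.
  apply: le_trans (mxnormD _ _) _; rewrite mxnormZ normc_mu lerD2r; nra.
have W_le : mxnorm (KQ - KD + invmx (P mu) *m KD *m D mu) <= bW.
  apply: le_trans (mxnormD _ _) _; rewrite lerD2l.
  apply: le_trans (mxnormM _ _) _; apply: ler_pM; rewrite ?mxnorm_ge0 //.
  apply: le_trans (mxnormM _ _) _; apply: ler_pM; rewrite ?mxnorm_ge0 //.
  exact: mxnorm_invmx_Phat (ltW mu0) muKD Pu.
have := perturb _ _ (toC mu) (lexx _) W_le; rewrite normc_mu tens_Esub_nilpotent //.
rewrite subr0 -TS_split // => /(_ mu1) /le_trans; apply.
by rewrite ler_pM2l // lerDl.
Qed.

End Smoother.

Theorem lemma1 (R : realType) (L M N : nat) (tau : 'I_M -> R)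
  (QD : 'M[R]_M) (A : 'M[R[i]]_N) :
  (0 < L)%N -> (0 < M)%N -> (0 < N)%N ->
  is_right_radau tau -> lower_tri QD ->
  exists mustar : R, exists c : R, 0 < mustar /\ 0 < c /\
    forall mu : R, 0 < mu -> mu < mustar ->
      Phat L QD A mu \in unitmx ->
      spectral_radius (TS L tau QD A mu) <= c * mu `^ (L%:R)^-1.
Proof.
move=> L0 _ _ _ _.
have [mustar [c [mustar0 [c0 TS_pow_le]]]] := mxnorm_TS_pow_le tau QD A L0.
exists mustar, (c `^ (L%:R)^-1); split => //; split; first by rewrite powR_gt0.
move=> mu mu0 mu_small Pu.
rewrite mulrC -powRM ?(ltW mu0) ?(ltW c0) //; apply: spectral_radius_le_root => //.
  by rewrite mulr_ge0 ?ltW.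
move=> l /(normc_eigenvalue_mxpow L) /le_trans; apply.
exact: TS_pow_le.
Qed.
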